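(* Let $\chi_1,\dots,\chi_n,\hbar,q_1,\dots,q_n$ be indeterminates and work in the field of rational functions over $\mathbb C$. Let $M(\chi)$ be the $2n\times2n$ block matrix $\begin{bmatrix}P&Q\\S&U\end{bmatrix}$ with $n\times n$ blocks: $P_{ii}=\chi_i$, $P_{ij}=\frac{\hbar}{1-q_i/q_j}$ ($i\ne j$); $U_{ii}=-\chi_{n+1-i}$, $U_{ij}=\frac{\hbar}{1-q_{n+1-j}/q_{n+1-i}}$ ($i\ne j$); $Q_{ij}=\frac{\hbar}{1-q_iq_{n+1-j}}$ if $i+j\ne n+1$ and $Q_{ij}=0$ if $i+j=n+1$; $S_{ij}=\frac{\hbar}{1-q_{n+1-i}^{-1}q_j^{-1}}$ if $i+j\ne n+1$ and $S_{ij}=0$ if $i+j=n+1$. Let $A(\chi)$ be the $n\times n$ matrix with $A_{ii}=\chi_i$ and $$A_{ij}=\frac{\hbar(1-q_i)(1+q_j)}{(1-q_i/q_j)(1-q_iq_j)}\quad(i\ne j),$$ and $A(-\chi)$ the same matrix with each $\chi_i$ replaced by $-\chi_i$. Then $$\det M(\chi)=\det A(\chi)\cdot\det A(-\chi).$$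
   Context: In the paper $M(\chi)$ is the matrix $\Theta(-\mathbf e_1)$ for type $D_n$ and $\chi_i=\Delta_{-\mathbf e_i}$; the identity is a formal one. *)

From HB Require Import structures.
From mathcomp Require Import all_boot all_order all_algebra.
From mathcomp Require Import complex.
From mathcomp Require Import Rstruct.
From mathcomp Require Import mpoly.
From Stdlib Require Rdefinitions.

Set Implicit Arguments.
Unset Strict Implicit.
Unset Printing Implicit Defensive.

Import Order.TTheory GRing.Theory Num.Theory.
Local Open Scope ring_scope.

Definition Cc : Type := complex Rdefinitions.R.

(* Variable indexing ('I_((n+n).+1)):
     chi_i  = 'X_i          for i < n
     hbar   = 'X_(n+n)
     q_i    = 'X_(n+i)      for i < n                                     *)
Definition PolyRing (n : nat) := {mpoly Cc[(n + n).+1]}.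
Definition RatFun (n : nat) := {fraction PolyRing n}.

Definition var (n k : nat) : RatFun n :=
  (@FracField.tofrac (PolyRing n) ('X_(inord k))).

Definition chi (n : nat) (i : 'I_n) : RatFun n := var n i.
Definition hbar (n : nat) : RatFun n := var n (n + n).
Definition qv (n : nat) (i : 'I_n) : RatFun n := var n (n + i).

(* 0-based indices: 1-based n+1-i corresponds to rev_ord i, and
   the condition i+j = n+1 (1-based) to i+j = n-1, i.e. j = rev_ord i. *)

Definition Pblk (n : nat) : 'M[RatFun n]_n :=
  \matrix_(i, j) if i == j then chi i
                 else hbar n / (1 - qv i / qv j).

Definition Ublk (n : nat) : 'M[RatFun n]_n :=
  \matrix_(i, j) if i == j then - chi (rev_ord i)
                 else hbar n / (1 - qv (rev_ord j) / qv (rev_ord i)).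

Definition Qblk (n : nat) : 'M[RatFun n]_n :=
  \matrix_(i, j) if j == rev_ord i then 0
                 else hbar n / (1 - qv i * qv (rev_ord j)).

Definition Sblk (n : nat) : 'M[RatFun n]_n :=
  \matrix_(i, j) if j == rev_ord i then 0
                 else hbar n / (1 - (qv (rev_ord i))^-1 * (qv j)^-1).

Definition Mmat (n : nat) : 'M[RatFun n]_(n + n) :=
  block_mx (Pblk n) (Qblk n) (Sblk n) (Ublk n).

(* A(s chi) for a sign s : s = 1 gives A(chi), s = -1 gives A(-chi). *)
Definition Amat (n : nat) (s : RatFun n) : 'M[RatFun n]_n :=
  \matrix_(i, j) if i == j then s * chi i
                 else hbar n * (1 - qv i) * (1 + qv j)
                      / ((1 - qv i / qv j) * (1 - qv i * qv j)).
Arguments Amat n s : clear implicits.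
Arguments Mmat n : clear implicits.

From mathcomp Require Import all_boot all_algebra.
From mathcomp Require Import perm complex Rstruct mpoly ring.
Import GRing.Theory.
Local Open Scope ring_scope.

(* Write M = [[P, Q], [S, U]], let J be the index-reversal permutation
   matrix and D = diag(q_1, ..., q_n).  Set X = J^-1 D and Y = D^-1 J, so
   that det Y * det X = 1.
   Conjugating the lower block row and the right block column,
       M' = [[P, Q X], [Y S, Y U X]]   has   det M' = det M.
   Entry by entry (each entry is a rational identity in two variables
   q_i, q_j and hbar) one checks
       P + Q X = A(chi),   Y S + Y U X = -A(chi),   Q X + Y U X = D^-1 A(-chi)^T D.
   Finally, for any block matrix [[a, b], [c, d]] whose four blocks add up
   to 0, multiplying by [[1, 0], [1, 1]] on both sides makes it block upper
   triangular, so its determinant is det (a + b) * det (b + d). *)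

Section BlockDeterminants.
Context {R : comRingType} {m : nat}.
Implicit Types a b c d X Y : 'M[R]_m.

Lemma det_block_rescale {X Y : 'M[R]_m} :
  \det Y * \det X = 1 -> forall a b c d,
  \det (block_mx a (b *m X) (Y *m c) (Y *m d *m X)) = \det (block_mx a b c d).
Proof.
move=> detYX a b c d.
have -> : block_mx a (b *m X) (Y *m c) (Y *m d *m X) =
    block_mx 1%:M 0 0 Y *m block_mx a b c d *m block_mx 1%:M 0 0 X.
  by rewrite !mulmx_block !mul1mx !mul0mx !mulmx0 !mulmx1 !addr0 !add0r.
by rewrite !det_mulmx !det_ublock !det1 !mul1r mulrAC detYX mul1r.
Qed.

(* If the four blocks sum to zero, the block matrix is equivalent (by the
   unimodular matrix [[1, 0], [1, 1]] on both sides) to the block upper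
   triangular matrix [[a + b, b], [0, b + d]]. *)
Lemma det_block_sum0 a b c d :
  a + b + (c + d) = 0 -> \det (block_mx a b c d) = \det (a + b) * \det (b + d).
Proof.
move=> sum0; set L : 'M[R]_(m + m) := block_mx 1%:M 0 1%:M 1%:M.
have detL : \det L = 1 by rewrite det_lblock !det1 mulr1.
have LML : L *m block_mx a b c d *m L = block_mx (a + b) b 0 (b + d).
  rewrite !mulmx_block !mul1mx !mul0mx !mulmx0 !mulmx1 !addr0 !add0r.
  by rewrite -addrACA sum0.
by rewrite -(det_ublock (a + b) b) -LML !det_mulmx detL mul1r mulr1.
Qed.

End BlockDeterminants.

Section DiagonalConjugation.
Variables (F : fieldType) (m : nat) (v : 'rV[F]_m).
Hypothesis v_nz : forall i, v 0 i != 0.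

Lemma det_diag_inv : \det (diag_mx (map_mx GRing.inv v)) * \det (diag_mx v) = 1.
Proof. by rewrite !det_diag -big_split /=; apply: big1 => i _; rewrite mxE mulVf. Qed.

Lemma det_diag_conj (B : 'M[F]_m) :
  \det (diag_mx (map_mx GRing.inv v) *m B *m diag_mx v) = \det B.
Proof. by rewrite !det_mulmx mulrAC det_diag_inv mul1r. Qed.

End DiagonalConjugation.

(* The three entrywise rational identities, with a = q_i, b = q_j (i != j)
   and h = hbar; they hold as soon as all denominators are nonzero. *)
Section EntryIdentities.
Variables (K : fieldType) (a b h : K).
Hypotheses (a_nz : a != 0) (b_nz : b != 0) (a_neq_b : a != b) (ab_neq1 : a * b != 1).

Local Ltac denominators :=
  by rewrite !subr_eq0 ?(mulrC b a) ?(eq_sym 1) ?(eq_sym b a)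
             ?a_nz ?b_nz ?a_neq_b ?ab_neq1.

Lemma top_entry :
  h / (1 - a / b) + h / (1 - a * b) * b =
  h * (1 - a) * (1 + b) / ((1 - a / b) * (1 - a * b)).
Proof. field; denominators. Qed.

Lemma bottom_entry :
  a^-1 * (h / (1 - a^-1 / b)) + a^-1 * (h / (1 - b / a)) * b =
  - (h * (1 - a) * (1 + b) / ((1 - a / b) * (1 - a * b))).
Proof. field; denominators. Qed.

Lemma right_entry :
  h / (1 - a * b) * b + a^-1 * (h / (1 - b / a)) * b =
  a^-1 * (h * (1 - b) * (1 + a) / ((1 - b / a) * (1 - b * a))) * b.
Proof. field; denominators. Qed.

End EntryIdentities.

Section RescaledBlocks.
Variable n : nat.

Lemma tofrac_neq0 (p : PolyRing n) (v : 'I_((n + n).+1) -> Cc) :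
  p.@[v] != 0 -> @FracField.tofrac (PolyRing n) p != 0.
Proof. by move=> pv_nz; rewrite tofrac_eq0; apply: contra pv_nz => /eqP ->; rewrite meval0. Qed.

Lemma qv_index_eq (i j : 'I_n) :
  (inord (n + i) == inord (n + j) :> 'I_((n + n).+1)) = (i == j).
Proof.
have lt_index (k : 'I_n) : (n + k < (n + n).+1)%N by rewrite ltnS leq_add2l ltnW.
apply/eqP/eqP => [eq_ij|-> //]; apply: val_inj.
by move: (congr1 val eq_ij); rewrite /= !inordK // => /addnI.
Qed.

Lemma qv_neq0 (i : 'I_n) : qv i != 0.
Proof. by apply: (@tofrac_neq0 _ (fun _ => 1)); rewrite mevalXU oner_neq0. Qed.

Lemma qv_inj (i j : 'I_n) : i != j -> qv i != qv j.
Proof.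
move=> neq_ij; rewrite -subr_eq0 /qv /var -tofracB.
apply: (@tofrac_neq0 _ (fun k => if k == inord (n + i) then 1 else 0)).
by rewrite mevalB !mevalXU eqxx qv_index_eq (eq_sym j) (negPf neq_ij) subr0 oner_neq0.
Qed.

Lemma qv_mul_neq1 (i j : 'I_n) : qv i * qv j != 1.
Proof.
rewrite -subr_eq0 /qv /var -tofracM -tofrac1 -tofracB.
apply: (@tofrac_neq0 _ (fun _ => 0)).
by rewrite mevalB mevalM !mevalXU meval1 mulr0 sub0r oppr_eq0 oner_neq0.
Qed.

Definition revp : 'S_n := perm (@rev_ord_inj n).
Definition qrow : 'rV[RatFun n]_n := \row_i qv i.
Definition Xq : 'M[RatFun n]_n := perm_mx revp^-1 *m diag_mx qrow.
Definition Yq : 'M[RatFun n]_n := diag_mx (map_mx GRing.inv qrow) *m perm_mx revp.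

Lemma qrow_nz (i : 'I_n) : qrow 0 i != 0.
Proof. by rewrite mxE qv_neq0. Qed.

Lemma mulYq_entry (B : 'M[RatFun n]_n) i j :
  (Yq *m B) i j = (qv i)^-1 * B (rev_ord i) j.
Proof. by rewrite -mulmxA -row_permE mul_diag_mx !mxE permE. Qed.

Lemma mulXq_entry (B : 'M[RatFun n]_n) i j :
  (B *m Xq) i j = B i (rev_ord j) * qv j.
Proof. by rewrite mulmxA -col_permE mul_mx_diag !mxE permE. Qed.

Lemma det_Yq_Xq : \det Yq * \det Xq = 1.
Proof.
rewrite !det_mulmx !det_perm odd_permV -mulrA signrMK.
exact: det_diag_inv qrow_nz.
Qed.

Lemma top_blocks : Pblk n + Qblk n *m Xq = Amat n 1.
Proof.
apply/matrixP => i j; rewrite [in LHS]mxE mulXq_entry !mxE !(inj_eq rev_ord_inj) rev_ordK.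
have [->|neq_ij] := eqVneq i j; first by rewrite mul0r addr0 mul1r.
by apply: top_entry; rewrite ?qv_neq0 ?qv_mul_neq1 ?qv_inj.
Qed.

Lemma bottom_blocks : Yq *m Sblk n + Yq *m Ublk n *m Xq = - Amat n 1.
Proof.
apply/matrixP => i j; rewrite [in LHS]mxE mulXq_entry !mulYq_entry !mxE.
rewrite !(inj_eq rev_ord_inj) !rev_ordK.
have [->|neq_ij] := eqVneq i j.
  by rewrite mulr0 add0r mulrN mulNr mulrAC mulVf ?qv_neq0 // !mul1r.
by apply: bottom_entry; rewrite ?qv_neq0 ?qv_mul_neq1 ?qv_inj.
Qed.

Lemma right_blocks :
  Qblk n *m Xq + Yq *m Ublk n *m Xq =
  diag_mx (map_mx GRing.inv qrow) *m (Amat n (-1))^T *m diag_mx qrow.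
Proof.
apply/matrixP => i j; rewrite [in LHS]mxE !mulXq_entry mulYq_entry.
rewrite mul_mx_diag mul_diag_mx !mxE !(inj_eq rev_ord_inj) !rev_ordK.
have [->|neq_ij] := eqVneq i j; first by rewrite mul0r add0r mulN1r.
by apply: right_entry; rewrite ?qv_neq0 ?qv_mul_neq1 ?qv_inj.
Qed.

End RescaledBlocks.

Theorem mainTheorem15 (n : nat) :
  \det (Mmat n) = \det (Amat n 1) * \det (Amat n (-1)).
Proof.
rewrite /Mmat -(det_block_rescale (det_Yq_Xq n)).
rewrite det_block_sum0; last by rewrite top_blocks bottom_blocks subrr.
by rewrite top_blocks right_blocks det_diag_conj ?det_tr //; exact: qrow_nz.
Qed.
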